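(* Let $N=[n]$ and let $v:2^N\to\mathbb{R}_+$ be any monotone valuation with $v(\emptyset)=0$. Let $X$ be a maximal decision map for $v$ and let $p$ be a pure Nash equilibrium of the pricing game defined by $v$ and $X$. Then for any (not necessarily maximal) decision map $X'$ for $v$ and every $\epsilon>0$ there exists $p^\epsilon\in\mathbb{R}^n_+$ which is an $\epsilon$-Nash equilibrium of the pricing game defined by $v$ and $X'$, such that $v(X'(p^\epsilon))=v(X(p))$, and $p^\epsilon\to p$ as $\epsilon\to 0$.
   Context: Pricing game: $N=[n]$ is a set of services, service $i$ controlled by seller $i$. A buyer has valuation $v:2^N\to\mathbb{R}_+$, monotone with $v(\emptyset)=0$. For $p\in\mathbb{R}^n_+$, $p(S)=\sum_{j\in S}p_j$ and $D(v;p)=\arg\max_{S\subseteq N}(v(S)-p(S))$. A decision map is $X:\mathbb{R}^n_+\to 2^N$ with $X(p)\in D(v;p)$ for all $p$; it is maximal if for every $p$ there is no $S'\in D(v;p)$ with $X(p)\subsetneq S'$. Given a decision map $Y$, seller $i$'s utility is $u_i^Y(p)=p_i\cdot\mathbf{1}\{i\in Y(p)\}$. A pure Nash equilibrium of the game defined by $Y$ is a $p$ with $u^Y_i(p)\ge u^Y_i(p_i',p_{-i})$ for all $i$ and $p_i'\in\mathbb{R}_+$; an $\epsilon$-Nash equilibrium is a $p$ with $u^Y_i(p)\ge u^Y_i(p_i',p_{-i})-\epsilon$ for all $i$ and $p_i'\in\mathbb{R}_+$. The welfare of the game defined by $Y$ at $p$ is $v(Y(p))$. *)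

From HB Require Import structures.
From mathcomp Require Import all_boot all_order all_algebra.
From mathcomp Require Import reals.
Set Implicit Arguments. Unset Strict Implicit. Unset Printing Implicit Defensive.
Import Order.TTheory GRing.Theory Num.Theory.
Local Open Scope ring_scope.

Section Pricing.
Variables (R : realType) (n : nat).

Definition nonneg_prices (p : 'I_n -> R) : Prop := forall i, 0 <= p i.

Definition valuation (v : {set 'I_n} -> R) : Prop :=
  [/\ forall S : {set 'I_n}, 0 <= v S,
      forall S T : {set 'I_n}, S \subset T -> v S <= v T
    & v set0 = 0].

Definition price_of (p : 'I_n -> R) (S : {set 'I_n}) : R := \sum_(j in S) p j.

Definition in_demand (v : {set 'I_n} -> R) (p : 'I_n -> R) (S : {set 'I_n}) : Prop :=
  forall T : {set 'I_n}, v T - price_of p T <= v S - price_of p S.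

Definition decision_map (v : {set 'I_n} -> R) (X : ('I_n -> R) -> {set 'I_n}) : Prop :=
  forall p, nonneg_prices p -> in_demand v p (X p).

Definition maximal_decision_map (v : {set 'I_n} -> R) (X : ('I_n -> R) -> {set 'I_n}) : Prop :=
  decision_map v X /\
  forall p, nonneg_prices p ->
    ~ exists S', in_demand v p S' /\ X p \proper S'.

Definition upd (p : 'I_n -> R) (i : 'I_n) (x : R) : 'I_n -> R :=
  fun j => if j == i then x else p j.

Definition seller_utility (Y : ('I_n -> R) -> {set 'I_n}) (i : 'I_n) (p : 'I_n -> R) : R :=
  p i * (i \in Y p)%:R.

Definition eps_nash (Y : ('I_n -> R) -> {set 'I_n}) (eps : R) (p : 'I_n -> R) : Prop :=
  nonneg_prices p /\
  forall (i : 'I_n) (x : R), 0 <= x ->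
    seller_utility Y i (upd p i x) - eps <= seller_utility Y i p.

Definition pure_nash (Y : ('I_n -> R) -> {set 'I_n}) (p : 'I_n -> R) : Prop :=
  nonneg_prices p /\
  forall (i : 'I_n) (x : R), 0 <= x ->
    seller_utility Y i (upd p i x) <= seller_utility Y i p.

Definition converges_at_0plus (pe : R -> 'I_n -> R) (p : 'I_n -> R) : Prop :=
  forall delta : R, 0 < delta -> exists eta : R, 0 < eta /\
    forall eps : R, 0 < eps -> eps < eta -> forall i, `|pe eps i - p i| < delta.

End Pricing.

From HB Require Import structures.
From mathcomp Require Import all_boot all_order all_algebra.
From mathcomp Require Import reals ring lra.
Import Order.TTheory GRing.Theory Num.Theory.
Local Open Scope ring_scope.

(* Move from p to q := perturb p (X p) t: prices in S := X p are scaled by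
   (1 - t), the others are raised by t.  By the law of demand every set
   demanded at q is a subset of S dropping only free services, hence has the
   value of S.  A deviation of seller i from q changes the buyer's problem
   only through price differences of order t relative to the corresponding
   deviation from p, so it can gain at most O(t) more than a deviation from
   the equilibrium p, i.e. O(t) in total. *)

Section PricingGame.
Variables (R : realType) (n : nat).
Implicit Types (delta : R) (v : {set 'I_n} -> R) (p q : 'I_n -> R).
Implicit Types (S T A : {set 'I_n}).

Lemma price_of_upd p i x A :
  price_of (upd p i x) A = price_of p A + (x - p i) * (i \in A)%:R.
Proof.
rewrite /price_of; case: (boolP (i \in A)) => iA; last first.
  rewrite mulr0 addr0; apply: eq_bigr => j jA.
  by rewrite /upd; case: eqP => // ji; rewrite -ji jA in iA.
rewrite (bigD1 i iA) [in RHS](bigD1 i iA) /= /upd eqxx mulr1.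
rewrite (eq_bigr p); last by move=> j /andP[_ /negbTE ->].
lra.
Qed.

Lemma upd_nonneg {p} i {x} :
  nonneg_prices p -> 0 <= x -> nonneg_prices (upd p i x).
Proof. by move=> p0 x0 j; rewrite /upd; case: eqP. Qed.

Lemma nonneg_le_sum {p} i : nonneg_prices p -> p i <= \sum_j p j.
Proof. by move=> p0; rewrite (bigD1 i) //= lerDl sumr_ge0. Qed.

Lemma price_of_dist {p q delta} A :
  (forall j, `|q j - p j| <= delta) ->
  `|price_of q A - price_of p A| <= n%:R * delta.
Proof.
move=> close; rewrite /price_of -sumrB.
apply: le_trans (ler_norm_sum _ _ _) _.
apply: (@le_trans _ _ (\sum_j `|q j - p j|)).
  by rewrite [leRHS](bigID (mem A)) /= lerDl sumr_ge0.
rewrite -[n in n%:R]card_ord -sumr_const mulr_suml.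
by apply: ler_sum => j _; rewrite mul1r.
Qed.

Lemma price_of_subset {p S T} :
  T \subset S -> (forall j, j \in S -> j \notin T -> p j = 0) ->
  price_of p T = price_of p S.
Proof.
move=> sTS p0; rewrite /price_of [RHS](big_setID T) /= (setIidPr sTS).
by rewrite [X in _ + X]big1 ?addr0 // => j /setDP[jS jT]; apply: p0.
Qed.

Lemma in_demand_exchange {v p q S T} :
  in_demand v p S -> in_demand v q T ->
  price_of q T - price_of p T <= price_of q S - price_of p S.
Proof. by move=> /(_ T) hS /(_ S) hT; lra. Qed.

Lemma nash_deviation_bound {v X X' p q delta i x} :
  decision_map v X -> decision_map v X' -> pure_nash X p -> nonneg_prices q ->
  (forall j, `|q j - p j| <= delta) -> 0 <= x -> i \in X' (upd q i x) ->
  x <= seller_utility X i p + (2 * n%:R + 1) * delta.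
Proof.
move=> hX hX' [p0 nash] q0 close x0 iW.
have u0 : 0 <= seller_utility X i p by rewrite mulr_ge0.
apply/ler_addgt0Pr => e e0.
set y := x - ((2 * n%:R + 1) * delta + e); have yE : y = x - _ := erefl.
have [|y0] := ltrP y 0; first by lra.
have := nash i _ y0; rewrite /seller_utility /upd eqxx.
have [iZ|iZ] := boolP (i \in X (upd p i y)); first by rewrite mulr1; lra.
move=> _; exfalso.
have := in_demand_exchange (hX _ (upd_nonneg i p0 y0))
                           (hX' _ (upd_nonneg i q0 x0)).
rewrite !price_of_upd iW (negbTE iZ) !mulr1 !mulr0 !addr0.
have := close i; have := price_of_dist (X' (upd q i x)) close.
have := price_of_dist (X (upd p i y)) close.
rewrite !ler_norml => /andP[? ?] /andP[? ?] /andP[? ?]; lra.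
Qed.

Definition perturb p S (t : R) : 'I_n -> R :=
  fun j => if j \in S then (1 - t) * p j else p j + t.

Lemma perturb_nonneg p S t :
  nonneg_prices p -> 0 <= t <= 1 -> nonneg_prices (perturb p S t).
Proof.
move=> p0 /andP[t0 t1] j; rewrite /perturb.
by case: ifP => _; [rewrite mulr_ge0 ?subr_ge0 | rewrite addr_ge0].
Qed.

Lemma perturb_dist {p} S {t} j :
  nonneg_prices p -> 0 <= t -> `|perturb p S t j - p j| <= t * (1 + \sum_k p k).
Proof.
move=> p0 t0; have pj_le := nonneg_le_sum j p0.
have := p0 j; rewrite /perturb; case: ifP => _ pj0.
  rewrite (_ : _ - _ = - (t * p j)); last by ring.
  by rewrite normrN ger0_norm ?mulr_ge0 //; nra.
rewrite addrAC subrr add0r ger0_norm //; nra.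
Qed.

Lemma in_demand_perturb {v p S t T} :
  nonneg_prices p -> 0 < t ->
  in_demand v p S -> in_demand v (perturb p S t) T ->
  [/\ T \subset S, forall j, j \in S -> j \notin T -> p j = 0 & v T = v S].
Proof.
move=> p0 t0 hS hT; set q := perturb p S t.
pose g j : R := if j \in S then p j * (j \notin T)%:R else (j \in T)%:R.
have g0 j : 0 <= g j by rewrite /g; case: ifP; rewrite ?mulr_ge0.
have gap : price_of q T - price_of p T - (price_of q S - price_of p S) =
           t * \sum_j g j.
  rewrite /price_of !(big_mkcond (fun j => j \in T)).
  rewrite !(big_mkcond (fun j => j \in S)) -!sumrB mulr_sumr.
  apply: eq_bigr => j _; rewrite /q /perturb /g.
  by case: (j \in S); case: (j \in T) => /=; ring.
have sum_g0 : \sum_j g j = 0.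
  apply/eqP; rewrite eq_le sumr_ge0 // andbT.
  have := in_demand_exchange hS hT; rewrite -(pmulr_rle0 _ t0); lra.
have g_eq0 j : g j = 0 by apply: (psumr_eq0P (fun j _ => g0 j) sum_g0).
have sTS : T \subset S.
  apply/subsetP => j jT; apply: contraT => jS.
  by have /eqP := g_eq0 j; rewrite /g (negbTE jS) jT oner_eq0.
have pS0 j : j \in S -> j \notin T -> p j = 0.
  by move=> jS jT; have := g_eq0 j; rewrite /g jS jT mulr1.
have qS0 j : j \in S -> j \notin T -> q j = 0.
  by move=> jS jT; rewrite /q /perturb jS pS0 ?mulr0.
split=> //; have := hS T; have := hT S.
by rewrite (price_of_subset sTS pS0) (price_of_subset sTS qS0); lra.
Qed.

Lemma perturb_eps_nash v X X' p t eps :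
  decision_map v X -> decision_map v X' -> pure_nash X p -> 0 < t <= 1 ->
  t * ((2 * n%:R + 2) * (1 + \sum_j p j)) <= eps ->
  eps_nash X' eps (perturb p (X p) t) /\ v (X' (perturb p (X p) t)) = v (X p).
Proof.
move=> hX hX' nash /andP[t0 t1] t_small; have [p0 _] := nash.
set S := X p; set q := perturb p S t; set T := X' q.
set M := 1 + \sum_j p j in t_small *.
have q0 : nonneg_prices q by apply: perturb_nonneg; rewrite // (ltW t0).
have [sTS pS0 vTS] := in_demand_perturb p0 t0 (hX p p0) (hX' q q0).
have M0 : 0 <= M by rewrite addr_ge0 ?sumr_ge0.
have K0 : 0 <= (2 * n%:R + 2) * M by rewrite mulr_ge0 // addr_ge0 // mulr_ge0.
have eps0 : 0 <= eps by apply: le_trans _ t_small; rewrite mulr_ge0 // ltW.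
split=> //; split=> // i x x0; rewrite /seller_utility.
have uq0 : 0 <= q i * (i \in T)%:R by rewrite mulr_ge0.
case: (boolP (i \in X' _)) => [iW|iW]; last by rewrite mulr0; lra.
have close j : `|q j - p j| <= t * M by apply: perturb_dist; rewrite // ltW.
have := nash_deviation_bound hX hX' nash q0 close x0 iW.
have pi_le : p i <= M by rewrite /M; have := nonneg_le_sum i p0; lra.
have loss : p i * (i \in S)%:R <= q i * (i \in T)%:R + t * M.
  rewrite /q /perturb; have := p0 i.
  have [iT|iT] := boolP (i \in T).
    by rewrite (subsetP sTS i iT) /= !mulr1; nra.
  rewrite mulr0 add0r => _; have tM0 : 0 <= t * M by rewrite mulr_ge0 // ltW.
  by have [/pS0/(_ iT)->|_] := boolP (i \in S); rewrite ?mul0r ?mulr0.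
rewrite /upd eqxx mulr1 /seller_utility -/S; nra.
Qed.

End PricingGame.

Arguments perturb {R n}.
Arguments perturb_dist {R n p} S {t}.

Theorem mainTheorem3 (R : realType) (n : nat)
    (v : {set 'I_n} -> R) (X : ('I_n -> R) -> {set 'I_n}) (p : 'I_n -> R) :
  valuation v ->
  maximal_decision_map v X ->
  pure_nash X p ->
  forall X' : ('I_n -> R) -> {set 'I_n},
    decision_map v X' ->
    exists pe : R -> 'I_n -> R,
      (forall eps : R, 0 < eps ->
         eps_nash X' eps (pe eps) /\ v (X' (pe eps)) = v (X p)) /\
      converges_at_0plus pe p.
Proof.
move=> _ [hX _] nash X' hX'; have [p0 _] := nash.
set M := 1 + \sum_j p j; set K := (2 * n%:R + 2) * M.
have M1 : 1 <= M by rewrite lerDl sumr_ge0.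
have MK : M <= K by rewrite /K; have := ler0n R n; nra.
pose t eps := eps / (K + eps).
have t_ok eps : 0 < eps -> [/\ 0 < t eps <= 1 & t eps * K <= eps].
  move=> eps0; have KE0 : 0 < K + eps by lra.
  rewrite /t divr_gt0 // ler_pdivrMr // mul1r mulrAC ler_pdivrMr //; nra.
exists (fun eps => perturb p (X p) (t eps)); split.
  by move=> eps /t_ok[t01 tK]; apply: perturb_eps_nash.
move=> delta delta0; exists delta; split=> //.
move=> eps /t_ok[/andP[t0 _] tK] lt_eps i.
have := perturb_dist (X p) i p0 (ltW t0); rewrite -/M.
have : t eps * M <= t eps * K by rewrite ler_pM2l.
lra.
Qed.
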